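(* Let $G$ be a graph on $n$ vertices, let $k,s$ be positive integers, let $J$ be a $(k,k)$-bigraph, and let $X,Y\subseteq V(G)$ be such that $G[X]$ is $J$-free and $Y$ is $(k,s)$-unrestricted. Then $\min\{|X\setminus Y|,|X\cap Y|\}\le ks$.
   Context: Graphs are finite and simple. A $(k_1,k_2)$-bigraph is a triple $J=(H,A,B)$ with $H$ bipartite with bipartition $(A,B)$, $|A|=k_1$, $|B|=k_2$. An embedding of $J$ into a graph $G$ is an injection $\eta:A\cup B\to V(G)$ such that for all $u\in A$, $v\in B$: $uv\in E(H)$ iff $\eta(u)\eta(v)\in E(G)$; $G$ is $J$-free if no embedding exists. An ordered bigraph is a bigraph with $A$ and $B$ linearly ordered. For disjoint ordered sets $A=(a_1,\dots,a_{k_1})$, $B=(b_1,\dots,b_{k_2})$ of vertices of $G$, $(A,B)$ induces the ordered bigraph $J'$ if $a_ib_j\in E(G)$ exactly when the $i$-th vertex of the first side of $J'$ is adjacent to the $j$-th vertex of its second side. A $k$-base on a set $X$ is a collection of pairwise disjoint ordered $k$-element subsets of $X$. For a $k_1$-base $\mathcal{A}$ and a $k_2$-base $\mathcal{B}$ (on vertex sets of $G$), $(\mathcal{A},\mathcal{B})$ induces $J'$ if some $A\in\mathcal{A}$, $B\in\mathcal{B}$ induce $J'$, is $J'$-free otherwise, and is restricted if it is $J'$-free for some ordered $(k_1,k_2)$-bigraph $J'$. A set $Y\subseteq V(G)$ is $(k,s)$-restricted if there exist a $k$-base $\mathcal{A}$ on $Y$ and a $k$-base $\mathcal{B}$ on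 $V(G)\setminus Y$ with $|\mathcal{A}|,|\mathcal{B}|\ge s$ and $(\mathcal{A},\mathcal{B})$ restricted; otherwise $Y$ is $(k,s)$-unrestricted. *)

From mathcomp Require Import all_boot.
Set Implicit Arguments. Unset Strict Implicit. Unset Printing Implicit Defensive.

Definition simple_graph (T : finType) (e : rel T) : Prop :=
  symmetric e /\ irreflexive e.

(* A (k1,k2)-bigraph J = (H, A, B): we take A = 'I_k1, B = 'I_k2 and record
   only the edges between A and B (H is bipartite with bipartition (A,B)).
   An ordered (k1,k2)-bigraph is the same data, with the orders on A, B
   being those of 'I_k1, 'I_k2. *)
Definition bigraph (k1 k2 : nat) := 'I_k1 -> 'I_k2 -> bool.

Definition embeds_in (T : finType) (e : rel T) (k1 k2 : nat)
  (J : bigraph k1 k2) (X : {set T}) : Prop :=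
  exists eta : 'I_k1 + 'I_k2 -> T,
    injective eta /\ (forall z, eta z \in X) /\
    (forall (u : 'I_k1) (v : 'I_k2), e (eta (inl u)) (eta (inr v)) = J u v).

Definition induced_free (T : finType) (e : rel T) (k1 k2 : nat)
  (J : bigraph k1 k2) (X : {set T}) : Prop :=
  ~ embeds_in e J X.

(* A k-base with m members on X: a family (f i)_{i < m} of ordered k-element
   subsets (f i 0, ..., f i (k-1)) of X, pairwise disjoint; encoded as
   f : 'I_m -> 'I_k -> T with (i,a) |-> f i a injective (so each ordered set
   has k distinct elements and distinct members are disjoint). For k >= 1
   the members are then distinct, so the base has exactly m members. *)
Definition is_base (T : finType) (k m : nat) (f : 'I_m -> 'I_k -> T)
  (X : {set T}) : Prop :=
  (forall i i' a a', f i a = f i' a' -> i = i' /\ a = a') /\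
  (forall i a, f i a \in X).

Definition base_induces (T : finType) (e : rel T) (k1 k2 m1 m2 : nat)
  (fA : 'I_m1 -> 'I_k1 -> T) (fB : 'I_m2 -> 'I_k2 -> T)
  (J' : bigraph k1 k2) : Prop :=
  exists (i : 'I_m1) (j : 'I_m2),
    forall (a : 'I_k1) (b : 'I_k2), e (fA i a) (fB j b) = J' a b.

Definition base_restricted (T : finType) (e : rel T) (k1 k2 m1 m2 : nat)
  (fA : 'I_m1 -> 'I_k1 -> T) (fB : 'I_m2 -> 'I_k2 -> T) : Prop :=
  exists J' : bigraph k1 k2, ~ base_induces e fA fB J'.

Definition ks_restricted (T : finType) (e : rel T) (k s : nat)
  (Y : {set T}) : Prop :=
  exists (m1 m2 : nat) (fA : 'I_m1 -> 'I_k -> T) (fB : 'I_m2 -> 'I_k -> T),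
    [/\ is_base fA Y, is_base fB (~: Y), s <= m1, s <= m2
      & base_restricted e fA fB].

Definition ks_unrestricted (T : finType) (e : rel T) (k s : nat)
  (Y : {set T}) : Prop :=
  ~ ks_restricted e k s Y.

From mathcomp Require Import all_boot.

Set Implicit Arguments.
Unset Strict Implicit.
Unset Printing Implicit Defensive.

(* If both X \ Y and X ∩ Y had more than ks vertices, they would carry k-bases
   with s members on Y and on its complement.  As Y is unrestricted, this pair
   of bases induces every ordered bigraph, J included; the two inducing members
   lie in X and are disjoint, so together they embed J into G[X]. *)

Lemma is_baseS (T : finType) (k m : nat) (f : 'I_m -> 'I_k -> T) (X Y : {set T}) :
  X \subset Y -> is_base f X -> is_base f Y.
Proof. by move=> /subsetP sXY [f_inj fX]; split=> // i a; apply/sXY/fX. Qed.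

Lemma base_of_card (T : finType) (Z : {set T}) (k m : nat) :
  k * m <= #|Z| -> exists f : 'I_m -> 'I_k -> T, is_base f Z.
Proof.
move=> le_km_Z.
have le_pairs_Z : #|{: 'I_m * 'I_k}| <= #|Z| by rewrite card_prod !card_ord mulnC.
exists (fun i a => enum_val (widen_ord le_pairs_Z (enum_rank (i, a)))); split.
- move=> i i' a a' /enum_val_inj /(congr1 val) /= /ord_inj /enum_rank_inj.
  by case=> -> ->.
- by move=> i a; apply: enum_valP.
Qed.

Lemma base_induces_embeds (T : finType) (e : rel T) (k1 k2 m1 m2 : nat)
    (fA : 'I_m1 -> 'I_k1 -> T) (fB : 'I_m2 -> 'I_k2 -> T) (J : bigraph k1 k2)
    (A B X : {set T}) :
  is_base fA A -> is_base fB B -> [disjoint A & B] ->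
  A \subset X -> B \subset X ->
  base_induces e fA fB J -> embeds_in e J X.
Proof.
move=> [fA_inj fA_A] [fB_inj fB_B] dis_AB /subsetP sAX /subsetP sBX [i [j ind_J]].
have fA_fB_neq a b : fA i a != fB j b.
  by apply: contraTneq (fA_A i a) => ->; rewrite (disjointFl dis_AB (fB_B j b)).
exists (fun z => match z with inl a => fA i a | inr b => fB j b end); split; [|split] => //.
- move=> [a|b] [a'|b'] /= eq_z.
  + by have [_ ->] := fA_inj _ _ _ _ eq_z.
  + by move/eqP: (fA_fB_neq a b').
  + by move/eqP: (fA_fB_neq a' b); rewrite eq_z.
  + by have [_ ->] := fB_inj _ _ _ _ eq_z.
- by case=> [a|b]; [apply/sAX/fA_A | apply/sBX/fB_B].
Qed.

Lemma unrestricted_base_induces (T : finType) (e : rel T) (k s m1 m2 : nat)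
    (fA : 'I_m1 -> 'I_k -> T) (fB : 'I_m2 -> 'I_k -> T) (J : bigraph k k)
    (Y : {set T}) :
  ks_unrestricted e k s Y -> is_base fA Y -> is_base fB (~: Y) ->
  s <= m1 -> s <= m2 -> ~ ~ base_induces e fA fB J.
Proof.
move=> unres_Y baseA baseB le_s_m1 le_s_m2 not_ind_J.
by apply: unres_Y; exists m1, m2, fA, fB; split=> //; exists J.
Qed.

Theorem lemma3p10 (T : finType) (e : rel T) (k s : nat) (J : bigraph k k)
  (X Y : {set T}) :
  simple_graph e -> 0 < k -> 0 < s ->
  induced_free e J X -> ks_unrestricted e k s Y ->
  minn #|X :\: Y| #|X :&: Y| <= k * s.
Proof.
move=> _ _ _ free_X unres_Y; rewrite leqNgt; apply/negP.
rewrite leq_min => /andP[/ltnW le_ks_XdY /ltnW le_ks_XiY].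
have [fA baseA] := base_of_card le_ks_XiY.
have [fB baseB] := base_of_card le_ks_XdY.
have baseA_Y := is_baseS (subsetIr X Y) baseA.
have baseB_nY : is_base fB (~: Y) by apply: is_baseS baseB; rewrite setDE subsetIr.
apply: (unrestricted_base_induces (J := J) unres_Y baseA_Y baseB_nY (leqnn s) (leqnn s)).
move=> ind_J; apply: free_X; apply: base_induces_embeds baseA baseB _ _ _ ind_J.
- by rewrite disjoint_subset; apply/subsetP => x; rewrite !inE => /andP[_ ->].
- exact: subsetIl.
- exact: subsetDl.
Qed.
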